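(* Let $n\ge 1$ and $d\in\mathbb{N}$ be integers, and define $N$ by $N(n,d)=N+1$. Let $\{r_k\}_{k\in\mathbb{N}}$ be a sequence of positive real numbers and, for each $k\in\mathbb{N}$, let $A_k=\{\mathbf{a}^k_0,\ldots,\mathbf{a}^k_N\}\subset\mathbb{R}^n$ be a set of $N+1$ distinct points. Suppose that: (1) $A_k$ is contained in the closed ball of radius $r_k$ centred at $\mathbf{a}^k_0$; (2) $\lim_{k\to\infty}\mathbf{a}^k_0=\boldsymbol{\xi}$ for some $\boldsymbol{\xi}\in\mathbb{R}^n$; (3) $\lim_{k\to\infty}r_k=0$; (4) there exists $c>0$ independent of $k$ such that $|\operatorname{Det} V(A_k)|\ge c\cdot r_k^{\,n\cdot N(n+1,d-1)}$ for all $k\in\mathbb{N}$. If $X\subset\mathbb{R}^n$ is a closed subset with $\bigcup_k A_k\subset X$, then $\tau^d_{N,\boldsymbol{\xi}}(X)=\mathcal{P}_d^*$.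
   Context: $N(n,d):=\binom{n+d}{d}$ (with $N(m,-1):=0$); it is the dimension of the space $\mathcal{P}_d$ of real polynomials in $n$ variables of degree $\le d$, and $\mathcal{P}_d^*$ is its dual. $I(n,d)$ is the set of multi-indices $\mathbf{j}=(j_1,\dots,j_n)\in\mathbb{Z}_{\ge0}^n$ with $|\mathbf{j}|=j_1+\dots+j_n\le d$, and $\mathbf{x}^{\mathbf{j}}=x_1^{j_1}\cdots x_n^{j_n}$. For a set $A=\{\mathbf{a}_0,\dots,\mathbf{a}_N\}$ of $N(n,d)$ points, with orderings of $A$ and of $I(n,d)=\{\mathbf{j}_0,\dots,\mathbf{j}_N\}$ fixed, the Vandermonde matrix is $V(A)=(\mathbf{a}_i^{\mathbf{j}_l})_{0\le i,l\le N}$; $|\operatorname{Det}V(A)|$ does not depend on the orderings. For $\mathbf{a}\in\mathbb{R}^n$ and $|\mathbf{p}|\le d$, $\delta^{(\mathbf{p})}_{\mathbf{a}}\in\mathcal{P}_d^*$ is $f\mapsto(-1)^{|\mathbf{p}|}\partial^{|\mathbf{p}|}f/\partial\mathbf{x}^{\mathbf{p}}(\mathbf{a})$, and $\delta_{\mathbf{a}}=\delta^{(\mathbf{0})}_{\mathbf{a}}$ (evaluation at $\mathbf{a}$). For $X\subset\mathbb{R}^n$, a bundle over $X$ is a subset $E\subset X\times\mathcal{P}_d^*$ whose fibres $E_{\mathbf{a}}=\{\xi:(\mathbf{a},\xi)\in E\}$ are linear subspaces. Higher order paratangent bundle $\tau^d_N(X)$ (Bierstone–Milman–Paw\l ucki):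 put $E_0=\{(\mathbf{a},\lambda\delta_{\mathbf{a}}):\mathbf{a}\in X,\lambda\in\mathbb{R}\}$. Given $E_k$, let $\Delta E_k$ be the set of $(\mathbf{a}_0,\dots,\mathbf{a}_N,\xi_0+\dots+\xi_N)\in X^{N+1}\times\mathcal{P}_d^*$ with $\mathbf{a}_i\in X$, $\xi_i\in E_{k,\mathbf{a}_i}$ and $|\mathbf{a}_i-\mathbf{a}_0|^{d-|\alpha|}\,|\xi_i((\mathbf{x}-\mathbf{a}_i)^\alpha)|\le1$ for all multi-indices $|\alpha|\le d$ and $0\le i\le N$. Let $E'_k$ be the set of $(\mathbf{a},\xi)\in X\times\mathcal{P}_d^*$ such that $(\mathbf{a},\dots,\mathbf{a},\xi)$ lies in the closure of $\Delta E_k$, and let $E_{k+1}$ be the bundle whose fibre at $\mathbf{a}$ is the linear span of $E'_{k,\mathbf{a}}$. The sequence $E_0\subset E_1\subset\cdots$ stabilizes, and $\tau^d_N(X):=E_{2\dim\mathcal{P}_d^*}$ is its stable value; $\tau^d_{N,\mathbf{a}}(X)$ denotes its fibre at $\mathbf{a}\in X$. *)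

From HB Require Import structures.
From mathcomp Require Import all_boot all_order all_algebra.
From mathcomp Require Import reals mpoly.

Set Implicit Arguments.
Unset Strict Implicit.
Unset Printing Implicit Defensive.

Import Order.TTheory GRing.Theory Num.Theory.
Local Open Scope ring_scope.

Section Paratangent.
Variable R : realType.

(* N(n,d) = binom(n+d, d), with N(m,-1) = 0 (the "-1" case is handled by
   Ndim_pred m d = N(m, d-1)). *)
Definition Ndim (m e : nat) : nat := 'C(m + e, e).
Definition Ndim_pred (m d : nat) : nat :=
  if d is d'.+1 then Ndim m d' else 0%N.

Definition point (n : nat) := 'I_n -> R.

Definition enorm n (v : point n) : R := Num.sqrt (\sum_(i < n) v i ^+ 2).
Definition pdist n (u v : point n) : R := enorm (fun i => u i - v i).

Definition mindex (n d : nat) := 'X_{1..n < d.+1}.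

Definition xmon n d (j : mindex n d) : {mpoly R[n]} := 'X_[val j].
Definition pow_pt n d (a : point n) (j : mindex n d) : R := (xmon j).@[a].

(* number of points N+1 = #I(n,d) = dim P_d *)
Definition Npts (n d : nat) : nat := #|{: mindex n d}|.

Lemma Npts_gt0 n d : (0 < Npts n d)%N.
Proof. by apply/card_gt0P; exists (@bm0 n d). Qed.

Definition idx0 n d : 'I_(Npts n d) := Ordinal (Npts_gt0 n d).

Definition vdm_matrix n d (A : 'I_(Npts n d) -> point n) : 'M[R]_(Npts n d) :=
  \matrix_(i, l) pow_pt (A i) (enum_val l).

(* P_d^* : a linear functional on P_d is identified with its values on the
   monomial basis {x^j : j in I(n,d)}; it acts on p in P_d by linearity. *)
Definition dual (n d : nat) := {ffun mindex n d -> R}.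
Definition dapp n d (xi : dual n d) (p : {mpoly R[n]}) : R :=
  \sum_(j : mindex n d) p@_(val j) * xi j.

Definition delta n d (a : point n) : dual n d := [ffun j => pow_pt a j].

Definition xminus_pow n d (a : point n) (al : mindex n d) : {mpoly R[n]} :=
  \prod_(l < n) ('X_l - (a l)%:MP) ^+ (val al l).

(* bundles over X: predicates E a xi meaning xi in E_a (a in X) *)
Definition bundle n d := point n -> dual n d -> Prop.

Definition E0 n d (X : point n -> Prop) : bundle n d :=
  fun a xi => X a /\ exists lam : R, xi = [ffun j => lam * delta d a j].

Definition DeltaE n d (X : point n -> Prop) (E : bundle n d)
    (b : 'I_(Npts n d) -> point n) (zeta : dual n d) : Prop :=
  exists xis : 'I_(Npts n d) -> dual n d,
    [/\ forall i, X (b i),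
        forall i, E (b i) (xis i),
        zeta = \sum_i xis i &
        forall (al : mindex n d) i,
          pdist (b i) (b (idx0 n d)) ^+ (d - mdeg (val al))
            * `|dapp (xis i) (xminus_pow (b i) al)| <= 1].

(* (a,...,a,xi) lies in the closure of Delta E (product topology on
   X^{N+1} x P_d^*, P_d^* with coordinates in the monomial basis) *)
Definition in_closure_diag n d (X : point n -> Prop) (E : bundle n d)
    (a : point n) (xi : dual n d) : Prop :=
  forall eps : R, 0 < eps ->
    exists b zeta, DeltaE X E b zeta /\
      (forall i, pdist (b i) a < eps) /\
      (forall j, `|zeta j - xi j| < eps).

Definition Eprime n d (X : point n -> Prop) (E : bundle n d) : bundle n d :=
  fun a xi => X a /\ in_closure_diag X E a xi.

Definition span_set n d (S : dual n d -> Prop) (xi : dual n d) : Prop :=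
  exists (k : nat) (s : 'I_k -> dual n d) (c : 'I_k -> R),
    (forall i, S (s i)) /\ xi = [ffun j => \sum_i c i * s i j].

Definition Enext n d (X : point n -> Prop) (E : bundle n d) : bundle n d :=
  fun a xi => X a /\ span_set (Eprime X E a) xi.

Fixpoint Eseq n d (X : point n -> Prop) (k : nat) : bundle n d :=
  if k is k'.+1 then @Enext n d X (Eseq X k') else @E0 n d X.

Definition paratangent n d (X : point n -> Prop) : bundle n d :=
  @Eseq n d X (2 * Npts n d).

Definition closed_set n (X : point n -> Prop) : Prop :=
  forall a : point n,
    (forall eps : R, 0 < eps -> exists b, X b /\ pdist b a < eps) -> X a.

End Paratangent.

From HB Require Import structures.
From mathcomp Require Import all_boot all_order all_algebra.
From mathcomp Require Import reals mpoly.
From mathcomp Require Import fingroup perm.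
From mathcomp Require Import zify ring lra.

(* Fix k, write a = A_k, and let y be close to xi. As Det V(a) <> 0, Cramer's
   rule writes delta_y = sum_i lam_i delta_(a_i) with
   lam_i = Det V(a with a_i replaced by y) / Det V(a). Each lam_i delta_(a_i)
   lies in E_0, and since delta_(a_i) kills (x - a_i)^alpha for alpha <> 0 the
   only constraint of Delta E is |a_i - a_0|^d |lam_i| <= 1. After translating
   a_0 to the origin, all rows of the numerator matrix but the i-th have entries
   a^j with |a| <= r_k, so its determinant is at most (N+1)! r_k^(S - d), where
   S = sum_(|j| <= d) |j| = n N(n+1, d-1); by (4) the denominator is at least
   c r_k^S. Hence t delta_y lies in Delta E_m over A_k, t = c / (N+1)!, and
   letting k go to infinity puts t delta_y in E'_m at xi. Finally, for one fixed
   large k, the functionals delta_y with y in A_k already span P_d^*. *)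

Set Implicit Arguments.
Unset Strict Implicit.
Unset Printing Implicit Defensive.

Import Order.TTheory GRing.Theory Num.Theory.
Local Open Scope ring_scope.

Section LeadingMonomial.
Variables (R : idomainType) (n : nat).
Implicit Types (p q : {mpoly R[n]}) (m : 'X_{1..n}).

Lemma msizeM_le_pred p q : (msize (p * q) <= (msize p + msize q).-1)%N.
Proof.
have [->|nz_p] := eqVneq p 0; first by rewrite mul0r msize0.
have [->|nz_q] := eqVneq q 0; first by rewrite mulr0 msize0.
by rewrite msizeM.
Qed.

(* As [msize] exceeds the total degree by one, this says that p is 'X_[m] plus
   terms of total degree < mdeg m. *)
Definition Xlead m p := (msize (p - 'X_[m]) <= mdeg m)%N.

Lemma Xlead1 : Xlead 0%MM 1.
Proof. by rewrite /Xlead mpolyX0 subrr msize0. Qed.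

Lemma XleadM m1 m2 p q :
  Xlead m1 p -> Xlead m2 q -> Xlead (m1 + m2)%MM (p * q).
Proof.
rewrite /Xlead mdegD; set p' := p - 'X_[m1]; set q' := q - 'X_[m2] => hp hq.
have -> : p * q - 'X_[m1 + m2] = 'X_[m1] * q' + p' * 'X_[m2] + p' * q'.
  by rewrite mpolyXD /p' /q'; ring.
have size_Xq := msizeM_le_pred 'X_[m1] q'; have size_pX := msizeM_le_pred p' 'X_[m2].
have size_pq := msizeM_le_pred p' q'; rewrite !msizeX in size_Xq size_pX.
have size_sum2 := mmeasureD_le mdeg ('X_[m1] * q') (p' * 'X_[m2]).
have size_sum3 := mmeasureD_le mdeg ('X_[m1] * q' + p' * 'X_[m2]) (p' * q').
apply: leq_trans size_sum3 _; rewrite geq_max; apply/andP; split; last lia.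
by apply: leq_trans size_sum2 _; rewrite geq_max; apply/andP; split; lia.
Qed.

Lemma XleadX m p k : Xlead m p -> Xlead (m *+ k)%MM (p ^+ k).
Proof.
move=> hp; elim: k => [|k ih]; first by rewrite expr0 mulm0n; exact: Xlead1.
by rewrite exprS mulmS; apply: XleadM.
Qed.

Lemma Xlead_XsubC i c : Xlead U_(i)%MM ('X_i - c%:MP).
Proof.
rewrite /Xlead mdeg1 (_ : _ - _ = (- c)%:MP); last by rewrite raddfN /mpolyX; ring.
by rewrite mmeasureC; case: (_ != 0).
Qed.

Lemma msize_Xlead m p : Xlead m p -> (msize p <= (mdeg m).+1)%N.
Proof.
rewrite /Xlead -{2}(subrK 'X_[m] p) => hp.
have := mmeasureD_le mdeg (p - 'X_[m]) 'X_[m]; rewrite msizeX => /leq_trans; apply.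
by rewrite geq_max leqnn andbT leqW.
Qed.

Lemma mcoeff_Xlead m p m' :
  Xlead m p -> (mdeg m <= mdeg m')%N -> p@_m' = (m == m')%:R.
Proof.
rewrite /Xlead -{2}(subrK 'X_[m] p) => hp hm'.
rewrite mcoeffD mcoeffX memN_msupp_eq0 ?add0r //.
by apply: msize_mdeg_ge; apply: leq_trans hp hm'.
Qed.

Definition shiftX (c : 'I_n -> R) m : {mpoly R[n]} :=
  \prod_(l < n) ('X_l - (c l)%:MP) ^+ m l.

Lemma Xlead_shiftX c m : Xlead m (shiftX c m).
Proof.
rewrite {1}(multinomUE_id m) /shiftX.
elim/big_rec2: _ => [|l m' p _ hp]; first exact: Xlead1.
by apply: XleadM => //; apply/XleadX/Xlead_XsubC.
Qed.

Lemma meval_shiftX v c m :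
  (shiftX c m).@[v] = \prod_(l < n) (v l - c l) ^+ m l.
Proof.
rewrite /shiftX (big_morph _ (@mevalM _ _ v) (meval1 v)).
by apply: eq_bigr => l _; rewrite rmorphXn /= mevalB mevalXU mevalC.
Qed.

End LeadingMonomial.

Lemma perm_weight_eq (I : finType) (w : I -> nat) (s : {perm I}) :
  (forall i, w i <= w (s i))%N -> forall i, w (s i) = w i.
Proof.
move=> hw i; apply/eqP; rewrite eqn_leq hw andbT leqNgt; apply/negP => hlt.
have : (\sum_i w (s i) = \sum_i w i)%N.
  exact: esym (reindex_inj (@perm_inj _ s)).
rewrite (bigD1 i) //= [X in _ = X](bigD1 i) //=.
have : (\sum_(j | j != i) w j <= \sum_(j | j != i) w (s j))%N by apply: leq_sum.
lia.
Qed.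

Lemma det_weight_unitrig (R : comRingType) m (w : 'I_m -> nat) (M : 'M[R]_m) :
  (forall i j, (w j <= w i)%N -> M i j = (i == j)%:R) -> \det M = 1.
Proof.
move=> hM.
have term_nonzero_perm1 (s : 'S_m) : (forall i, M i (s i) != 0) -> s = 1%g.
  move=> hs.
  have hw i : (w i <= w (s i))%N.
    rewrite leqNgt; apply/negP => lt_si; move: (hs i); rewrite hM; last exact: ltnW.
    by case: (eqVneq i (s i)) lt_si => [<-|_]; rewrite ?ltnn ?eqxx.
  apply/permP => i; rewrite perm1; move: (hs i).
  rewrite hM ?(perm_weight_eq hw) //.
  by case: (eqVneq i (s i)) => [<-|_]; rewrite ?eqxx.
rewrite /determinant (bigD1 1%g) //= [X in _ + X]big1 ?addr0.
  by rewrite odd_perm1 expr0 mul1r big1 // => i _; rewrite perm1 hM // eqxx.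
move=> s s_neq1; have /existsP [i /eqP Mi0] : [exists i, M i (s i) == 0].
  by apply: contraR s_neq1 => /existsPn hs; apply/eqP/term_nonzero_perm1.
by rewrite (bigD1 i) //= Mi0 mul0r mulr0.
Qed.

Lemma norm_det_le (R : numDomainType) m (M : 'M[R]_m) (F : 'I_m -> 'I_m -> R) :
  (forall i j, `|M i j| <= F i j) ->
  `|\det M| <= \sum_(s : 'S_m) \prod_i F i (s i).
Proof.
move=> hF; apply: le_trans (ler_norm_sum _ _ _) _; apply: ler_sum => s _.
rewrite normrM normr_sign mul1r normr_prod.
by apply: ler_prod => i _; rewrite normr_ge0 hF.
Qed.

Section DualBasis.
Variables (R : realType) (n d : nat).
Local Notation N1 := (Npts n d).
Implicit Types (zeta : dual R n d) (y : point R n).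

Lemma dapp_scale zeta lam p :
  dapp [ffun j => lam * zeta j] p = lam * dapp zeta p.
Proof. by rewrite /dapp mulr_sumr; apply: eq_bigr => j _; rewrite ffunE; ring. Qed.

Lemma dapp_delta (a : point R n) p : (msize p <= d.+1)%N -> dapp (delta d a) p = p.@[a].
Proof.
move=> hp; rewrite {2}(mpolywE hp) raddf_sum /=; apply: eq_bigr => j _.
by rewrite ffunE mevalZ.
Qed.

Lemma dapp_delta_xminus (a : point R n) (al : mindex n d) :
  dapp (delta d a) (xminus_pow a al) = (mdeg (val al) == 0%N)%:R.
Proof.
rewrite dapp_delta; last exact: leq_trans (msize_Xlead (Xlead_shiftX _ _)) (bmdeg al).
rewrite [xminus_pow _ _]/(shiftX a (val al)) meval_shiftX.
by under eq_bigr do rewrite subrr; rewrite prodrXr -mdegE expr0n.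
Qed.

Definition dual_row zeta : 'rV[R]_N1 := \row_l zeta (enum_val l).

Lemma dual_delta_expansion (a : 'I_N1 -> point R n) zeta :
  \det (vdm_matrix a) != 0 ->
  zeta = \sum_i [ffun j => (dual_row zeta *m invmx (vdm_matrix a)) 0 i * delta d (a i) j].
Proof.
move=> detV; have unitV : vdm_matrix a \in unitmx by rewrite unitmxE unitfE.
apply/ffunP => j; rewrite sum_ffunE.
have := congr1 (fun M : 'rV_N1 => M 0 (enum_rank j)) (mulmxKV unitV (dual_row zeta)).
rewrite /= !mxE enum_rankK => <-; apply: eq_bigr => i _.
by rewrite !ffunE !mxE enum_rankK.
Qed.

Definition repl_pt (a : 'I_N1 -> point R n) i y : 'I_N1 -> point R n :=
  fun q => if q == i then y else a q.

Lemma vdm_cramer (a : 'I_N1 -> point R n) y i :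
  \det (vdm_matrix a) != 0 ->
  (dual_row (delta d y) *m invmx (vdm_matrix a)) 0 i =
    \det (vdm_matrix (repl_pt a i y)) / \det (vdm_matrix a).
Proof.
move=> detV; have unitV : vdm_matrix a \in unitmx by rewrite unitmxE unitfE.
rewrite /invmx unitV -scalemxAr mxE (expand_det_row (vdm_matrix (repl_pt a i y)) i).
rewrite mulrC; congr (_ * _); rewrite mxE; apply: eq_bigr => l _.
rewrite !mxE ffunE /repl_pt eqxx; congr (_ * (_ * \det _)); apply/matrixP => q l'.
by rewrite !mxE eq_sym (negbTE (neq_lift _ _)).
Qed.

End DualBasis.

Section VandermondeTranslation.
Variables (R : realType) (n d : nat).
Local Notation N1 := (Npts n d).

Definition shift_mx (c : point R n) : 'M[R]_N1 :=
  \matrix_(b, l) (shiftX (fun k => - c k) (val (enum_val l)))@_(val (enum_val b)).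

Lemma det_shift_mx (c : point R n) : \det (shift_mx c) = 1.
Proof.
apply: (det_weight_unitrig (w := fun l => mdeg (val (enum_val l)))) => b l hl.
rewrite mxE (mcoeff_Xlead (Xlead_shiftX _ _)) //.
by rewrite (inj_eq val_inj) (inj_eq enum_val_inj) eq_sym.
Qed.

Lemma vdm_matrix_translate (a : 'I_N1 -> point R n) (c : point R n) :
  vdm_matrix a = vdm_matrix (fun i k => a i k - c k) *m shift_mx c.
Proof.
apply/matrixP => i l; rewrite !mxE.
have -> : pow_pt (a i) (enum_val l) =
    dapp (delta d (fun k => a i k - c k)) (shiftX (fun k => - c k) (val (enum_val l))).
  rewrite dapp_delta; last exact: leq_trans (msize_Xlead (Xlead_shiftX _ _)) (bmdeg _).
  rewrite meval_shiftX /pow_pt /xmon mevalX; apply: eq_bigr => k _.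
  by rewrite opprK subrK.
rewrite /dapp (big_enum_val (A := predT)) /=.
by apply: eq_bigr => b _; rewrite !mxE ffunE mulrC.
Qed.

Lemma det_vdm_translate (a : 'I_N1 -> point R n) (c : point R n) :
  \det (vdm_matrix a) = \det (vdm_matrix (fun i k => a i k - c k)).
Proof. by rewrite {1}(vdm_matrix_translate a c) det_mulmx det_shift_mx mulr1. Qed.

End VandermondeTranslation.

Section DegreeSum.
Local Open Scope nat_scope.

Lemma sum_mul_binomial n d :
  \sum_(e < d.+2) e * 'C(e + n, e) = n.+1 * 'C(n.+2 + d, d).
Proof.
elim: d => [|d ih]; first by rewrite !big_ord_recr big_ord0 /= bin1 !bin0; lia.
rewrite big_ord_recr /= ih.
have -> : 'C(n.+2 + d.+1, d.+1) = 'C(n.+2 + d, d) + 'C(n.+2 + d, d.+1).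
  by rewrite addnS binS addnC.
have := mul_bin_left (n.+2 + d) d.+1.
have -> : n.+2 + d - d.+1 = n.+1 by lia.
have -> : d.+2 + n = n.+2 + d by lia.
lia.
Qed.

Lemma card_mindex_mdeg n d e : e <= d ->
  #|[pred j : mindex n.+1 d | mdeg (val j) == e]| = 'C(e + n, e).
Proof.
move=> le_ed; rewrite -size_basis cardE -(size_map val); apply: perm_size.
apply: uniq_perm; [by rewrite (map_inj_uniq val_inj) enum_uniq | exact: uniq_basis |].
move=> m; rewrite -basis_cover; apply/mapP/idP => [[j]|/eqP mdeg_m].
  by rewrite mem_enum inE => /eqP <- ->.
have lt_md : mdeg m < d.+1 by rewrite mdeg_m ltnS.
by exists (BMultinom lt_md); rewrite // mem_enum inE /= mdeg_m.
Qed.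

Lemma sum_mdeg_mindex n d :
  \sum_(j : mindex n d) mdeg (val j) = n * Ndim_pred n.+1 d.
Proof.
case: n => [|n].
  by rewrite big1 // => j _; rewrite mdegE big_ord0.
rewrite (partition_big (fun j : mindex n.+1 d => Ordinal (bmdeg j)) xpredT) //=.
rewrite (eq_bigr (fun e : 'I_d.+1 => e * 'C(e + n, e))); last first.
  move=> e _; rewrite (eq_bigr (fun=> nat_of_ord e)); last by move=> j /eqP <-.
  rewrite sum_nat_const mulnC -(card_mindex_mdeg n (ltn_ord e : e <= d)).
  by congr (_ * _); apply: eq_card => j; rewrite !inE -val_eqE.
by case: d => [|d]; rewrite ?big_ord1 ?muln0 // sum_mul_binomial.
Qed.

End DegreeSum.

Section EuclideanDistance.
Variables (R : realType) (n : nat).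
Implicit Types u v w : point R n.

Lemma enorm_le_sum v : enorm v <= \sum_k `|v k|.
Proof.
have [sum_ge0 sqr_le] : 0 <= \sum_k `|v k| /\ \sum_k v k ^+ 2 <= (\sum_k `|v k|) ^+ 2.
  elim/big_rec2: _ => [|k x y _ [y0 hxy]]; first by rewrite expr0n /= lexx.
  split; first by rewrite addr_ge0.
  rewrite -[v k ^+ 2]real_normK ?num_real //; have := normr_ge0 (v k); nra.
by rewrite /enorm -(ger0_norm sum_ge0) -sqrtr_sqr ler_sqrt // sqr_ge0.
Qed.

Lemma normB_le_pdist u v k : `|u k - v k| <= pdist u v.
Proof.
have sqr_sum_ge0 : 0 <= \sum_i (u i - v i) ^+ 2 by rewrite sumr_ge0 // => i _; exact: sqr_ge0.
rewrite /pdist /enorm -sqrtr_sqr ler_sqrt // (bigD1 k) //= lerDl.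
by rewrite sumr_ge0 // => i _; exact: sqr_ge0.
Qed.

Lemma pdist_ge0 u v : 0 <= pdist u v.
Proof. exact: sqrtr_ge0. Qed.

Lemma pdistxx u : pdist u u = 0.
Proof.
apply/eqP; rewrite eq_le pdist_ge0 andbT; apply: le_trans (enorm_le_sum _) _.
by rewrite big1 // => i _; rewrite subrr normr0.
Qed.

Lemma normB_le_pdistD u v w k : `|u k - w k| <= pdist u v + pdist v w.
Proof.
rewrite (_ : u k - w k = (u k - v k) + (v k - w k)); last by ring.
by apply: le_trans (ler_normD _ _) _; rewrite lerD ?normB_le_pdist.
Qed.

Lemma pdist_triangle_dim u v w : pdist u w <= n%:R * (pdist u v + pdist v w).
Proof.
apply: le_trans (enorm_le_sum _) _; rewrite -[n in n%:R]card_ord mulr_natl -sumr_const.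
by apply: ler_sum => k _; exact: normB_le_pdistD.
Qed.

End EuclideanDistance.

Section ParatangentAtLimit.
Variables (R : realType) (n d : nat) (X : point R n -> Prop).
Local Notation N1 := (Npts n d).
Local Notation a0 a := (a (idx0 n d)).
Local Notation vdm_deg := (n * Ndim_pred n.+1 d)%N.

Lemma Eseq_scale_delta m a (lam : R) : X a -> Eseq X m a [ffun j => lam * delta d a j].
Proof.
move=> Xa; elim: m lam => [|m ih] lam; first by split => //; exists lam.
split => //; exists 1%N, (fun _ => [ffun j => 1 * delta d a j]), (fun _ => lam).
split; last by apply/ffunP => j; rewrite !ffunE big_ord1 mul1r.
move=> _; split => // eps eps0.
exists (fun _ => a), [ffun j => 1 * delta d a j]; split; last first.
  by split => [i|j]; rewrite ?pdistxx // subrr normr0.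
exists (fun i => [ffun j => (i == idx0 n d)%:R * delta d a j]); split => //.
  apply/ffunP => j; rewrite sum_ffunE (bigD1 (idx0 n d)) //= big1 => [|i /negbTE ->].
    by rewrite !ffunE addr0.
  by rewrite ffunE mul0r.
move=> al i; rewrite dapp_scale dapp_delta_xminus pdistxx normrM !normr_nat.
rewrite expr0n -!natrM lern1.
by case: (_ == _); case: (_ == _); case: (_ == _).
Qed.

Lemma norm_det_vdm_le (B : 'I_N1 -> point R n) (r : R) i0 :
  0 < r -> r <= 1 ->
  (forall i k, i != i0 -> `|B i k| <= r) -> (forall k, `|B i0 k| <= 1) ->
  `|\det (vdm_matrix B)| <= N1`!%:R * (r ^+ vdm_deg / r ^+ d).
Proof.
move=> r0 r1 hB hB0.
have pow_le (b : point R n) (s : R) (j : mindex n d) :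
    0 <= s -> (forall k, `|b k| <= s) -> `|pow_pt b j| <= s ^+ mdeg (val j).
  move=> s0 hb; rewrite /pow_pt /xmon mevalX normr_prod mdegE -prodrXr.
  by apply: ler_prod => k _; rewrite normr_ge0 normrX lerXn2r ?nnegrE.
pose F (i l : 'I_N1) := r ^+ mdeg (val (enum_val l)) * (if i == i0 then (r ^+ d)^-1 else 1).
have hF i l : `|vdm_matrix B i l| <= F i l.
  rewrite mxE /F; case: eqP => [->|/eqP ne]; last first.
    by rewrite mulr1; apply: pow_le => [|k]; [exact: ltW | exact: hB].
  apply: le_trans (pow_le _ 1 _ ler01 hB0) _; rewrite expr1n.
  rewrite ler_pdivlMr ?exprn_gt0 // mul1r ler_wiXn2l ?(ltW r0) //.
  by rewrite -ltnS bmdeg.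
have prodF (s : 'S_N1) : \prod_i F i (s i) = r ^+ vdm_deg / r ^+ d.
  rewrite /F big_split /= prodrXr [X in _ * X](bigD1 i0) //= eqxx.
  rewrite [X in _ * (_ * X)]big1 ?mulr1 => [|i /negbTE -> //].
  have -> : (\sum_(i : 'I_N1) mdeg (val (enum_val (s i))) =
            \sum_(i : 'I_N1) mdeg (val (enum_val i)))%N.
    exact: esym (reindex_perm s).
  by rewrite -(big_enum_val (A := predT) (fun j => mdeg (val j))) sum_mdeg_mindex.
apply: le_trans (norm_det_le hF) _.
by rewrite (eq_bigr _ (fun s _ => prodF s)) sumr_const card_Sn mulr_natl.
Qed.

Lemma norm_det_vdm_repl_le (a : 'I_N1 -> point R n) y (r : R) i :
  0 < r -> r <= 1 ->
  (forall q, pdist (a q) (a0 a) <= r) -> (forall k, `|y k - a0 a k| <= 1) ->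
  pdist (a i) (a0 a) ^+ d * `|\det (vdm_matrix (repl_pt a i y))| <= N1`!%:R * r ^+ vdm_deg.
Proof.
move=> r0 r1 near_a near_y; rewrite (det_vdm_translate _ (a0 a)).
have hdet : `|\det (vdm_matrix (fun q k => repl_pt a i y q k - a0 a k))|
    <= N1`!%:R * (r ^+ vdm_deg / r ^+ d).
  apply: (norm_det_vdm_le (i0 := i)) => // [q k /negbTE q_neq_i | k]; rewrite /repl_pt ?q_neq_i ?eqxx //.
  exact: le_trans (normB_le_pdist _ _ _) (near_a q).
have rd0 : 0 < r ^+ d by rewrite exprn_gt0.
have pd : pdist (a i) (a0 a) ^+ d <= r ^+ d.
  by rewrite lerXn2r ?nnegrE ?pdist_ge0 ?(ltW r0).
apply: le_trans (ler_pM _ _ pd hdet) _; rewrite ?exprn_ge0 ?pdist_ge0 //.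
by rewrite mulrCA [r ^+ d * _]mulrC divfK ?gt_eqF.
Qed.

Lemma DeltaE_scaled_delta m (a : 'I_N1 -> point R n) y (r c : R) :
  0 < r -> r <= 1 -> 0 < c -> (forall i, X (a i)) ->
  (forall q, pdist (a q) (a0 a) <= r) -> (forall k, `|y k - a0 a k| <= 1) ->
  c * r ^+ vdm_deg <= `|\det (vdm_matrix a)| ->
  DeltaE X (Eseq X m) a [ffun j => c / N1`!%:R * delta d y j].
Proof.
move=> r0 r1 c0 Xa near_a near_y hdet; set t := c / N1`!%:R.
have fact0 : 0 < N1`!%:R :> R by rewrite ltr0n fact_gt0.
have t0 : 0 < t by rewrite divr_gt0.
have detV0 : 0 < `|\det (vdm_matrix a)|.
  by apply: lt_le_trans hdet; rewrite mulr_gt0 ?exprn_gt0.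
have detV : \det (vdm_matrix a) != 0 by rewrite -normr_gt0.
pose lam i := t * (\det (vdm_matrix (repl_pt a i y)) / \det (vdm_matrix a)).
exists (fun i => [ffun j => lam i * delta d (a i) j]); split.
- exact: Xa.
- by move=> i; apply: Eseq_scale_delta.
- rewrite {1}(dual_delta_expansion [ffun j => t * delta d y j] detV).
  apply: eq_bigr => i _; apply/ffunP => j; rewrite !ffunE; congr (_ * _).
  have -> : dual_row [ffun j => t * delta d y j] = t *: dual_row (delta d y).
    by apply/rowP => l; rewrite !mxE ffunE.
  by rewrite -scalemxAl mxE vdm_cramer.
move=> al i; rewrite dapp_scale dapp_delta_xminus.
case: eqP => [->|_]; last by rewrite mulr0 normr0 mulr0 ler01.
rewrite subn0 mulr1 /lam normrM (gtr0_norm t0) normrM normfV.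
have hrepl := norm_det_vdm_repl_le i r0 r1 near_a near_y.
set P := pdist _ _ ^+ d in hrepl *; set Di := `|\det _| in hrepl *.
rewrite (_ : P * _ = t * (P * Di) / `|\det (vdm_matrix a)|); last by ring.
rewrite ler_pdivrMr // mul1r; apply: le_trans hdet.
by apply: le_trans (ler_wpM2l (ltW t0) hrepl) _; rewrite mulrA divfK ?gt_eqF.
Qed.

Lemma in_closure_diag_scaled_delta m (A : nat -> 'I_N1 -> point R n) (r : nat -> R)
    (xi y : point R n) (c : R) :
  (forall k, 0 < r k) -> (forall k i, X (A k i)) ->
  (forall k i, pdist (A k i) (a0 (A k)) <= r k) ->
  (forall e, 0 < e -> exists k, pdist (a0 (A k)) xi < e /\ r k < e) ->
  0 < c -> (forall k, c * r k ^+ vdm_deg <= `|\det (vdm_matrix (A k))|) ->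
  (forall l, `|y l - xi l| <= 2^-1) ->
  in_closure_diag X (Eseq X m) xi [ffun j => c / N1`!%:R * delta d y j].
Proof.
move=> r0 XA near_A close_A c0 hdet near_y eps eps0.
have [rho [rho0 eps_rho]] : exists rho, 0 < rho /\ eps = n.+1%:R * rho.
  exists (eps / n.+1%:R); rewrite divr_gt0 ?ltr0Sn //.
  by split; rewrite // mulrC divfK ?pnatr_eq0.
have [e [e0 e_le_half e_le_rho]] : exists e, [/\ 0 < e, e <= 2^-1 & e + e <= rho].
  have : Num.min 2^-1 rho <= 2^-1 /\ Num.min 2^-1 rho <= rho.
    by rewrite !ge_min !lexx orbT.
  have : 0 < Num.min 2^-1 rho by rewrite lt_min invr_gt0 ltr0n.
  by exists (Num.min 2^-1 rho / 2); split; lra.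
have [k [near_xi rk_lt]] := close_A e e0.
exists (A k), [ffun j => c / N1`!%:R * delta d y j]; split; last split.
- apply: DeltaE_scaled_delta (r0 k) _ c0 (XA k) (near_A k) _ (hdet k); first lra.
  move=> l; rewrite (_ : y l - _ = (y l - xi l) + (xi l - a0 (A k) l)); last by ring.
  apply: le_trans (ler_normD _ _) _; rewrite [`|xi l - _|]distrC.
  have := normB_le_pdist (a0 (A k)) xi l; have := near_y l; lra.
- move=> i; apply: le_lt_trans (pdist_triangle_dim _ (a0 (A k)) _) _.
  have := near_A k i; have := pdist_ge0 (A k i) (a0 (A k)).
  have := pdist_ge0 (a0 (A k)) xi; have := ler0n R n.
  by rewrite eps_rho -natr1; nra.
- by move=> j; rewrite subrr normr0.
Qed.

End ParatangentAtLimit.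

Theorem theorem4p1 (R : realType) (n d : nat) (hn : (0 < n)%N)
  (r : nat -> R) (A : nat -> 'I_(Npts n d) -> point R n) (xi : point R n)
  (X : point R n -> Prop) :
  (forall k, 0 < r k) ->
  (forall k, injective (A k)) ->
  (forall k i, pdist (A k i) (A k (idx0 n d)) <= r k) ->
  (forall eps : R, 0 < eps -> exists K : nat, forall k : nat, (K <= k)%N ->
      pdist (A k (idx0 n d)) xi < eps) ->
  (forall eps : R, 0 < eps -> exists K : nat, forall k : nat, (K <= k)%N ->
      `|r k| < eps) ->
  (exists c : R, 0 < c /\ forall k,
      c * r k ^+ (n * Ndim_pred n.+1 d) <= `|\det (vdm_matrix (A k))|) ->
  closed_set X ->
  (forall k i, X (A k i)) ->
  forall zeta : dual R n d, @paratangent R n d X xi zeta.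
Proof.
move=> r0 _ near_A lim_A lim_r [c [c0 hdet]] closedX XA zeta.
have close_A e : 0 < e -> exists k, pdist (A k (idx0 n d)) xi < e /\ r k < e.
  move=> e0; have [K1 hK1] := lim_A e e0; have [K2 hK2] := lim_r e e0.
  exists (maxn K1 K2); rewrite hK1 ?leq_maxl //.
  by rewrite -[r _]gtr0_norm ?hK2 ?leq_maxr.
have Xxi : X xi.
  by apply: closedX => e /close_A [k [near_k _]]; exists (A k (idx0 n d)).
have [k [near_k rk_lt]] : exists k, pdist (A k (idx0 n d)) xi < 4^-1 /\ r k < 4^-1.
  by apply: close_A; rewrite invr_gt0 ltr0n.
have near_xi i l : `|A k i l - xi l| <= 2^-1.
  by have := normB_le_pdistD (A k i) (A k (idx0 n d)) xi l; have := near_A k i; lra.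
have detV : \det (vdm_matrix (A k)) != 0.
  rewrite -normr_gt0; apply: lt_le_trans (hdet k).
  by rewrite mulr_gt0 ?exprn_gt0.
pose t := c / (Npts n d)`!%:R.
have t0 : t != 0 by rewrite mulf_neq0 ?invr_eq0 ?gt_eqF ?ltr0n ?fact_gt0.
rewrite /paratangent; case E: (2 * Npts n d)%N => [|m].
  by have := Npts_gt0 n d; lia.
split=> //; exists (Npts n d), (fun i => [ffun j => t * delta d (A k i) j]).
exists (fun i => (dual_row zeta *m invmx (vdm_matrix (A k))) 0 i / t); split.
  by move=> i; split; last exact: (in_closure_diag_scaled_delta _ r0 XA near_A close_A).
rewrite {1}(dual_delta_expansion zeta detV); apply/ffunP => j; rewrite !sum_ffunE ffunE.
by apply: eq_bigr => i _; rewrite !ffunE mulrA divfK.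
Qed.
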